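(* Let $(S,\mathcal{E}^Q)$ be a quantitative evidence frame with $\mathcal{E}^Q=\{(E_1,p_1),\dots,(E_k,p_k)\}$. Let $i:2^{\mathcal{E}}\to\tau_{\mathcal{E}}$ be given by $i(\emptyset)=S$ and $i(\mathbf{E})=\bigcap\mathbf{E}$ for $\mathbf{E}\neq\emptyset$, and let $\mathcal{J}_{DS}=\tau_{\mathcal{E}}\setminus\{\emptyset\}$. For $j=1,\dots,k$ let $m_j$ be the basic probability assignment on $S$ with $m_j(E_j)=p_j$, $m_j(S)=1-p_j$ (and $0$ elsewhere), let $m=m_1\oplus\cdots\oplus m_k$ be obtained by Dempster's rule of combination, and let $\mathrm{Bel}(P)=\sum_{A\subseteq P}m(A)$. Then $\mathrm{Bel}_{\mathcal{J}_{DS}}(i,P)=\mathrm{Bel}(P)$ for every $P\subseteq S$.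
   Context: A quantitative evidence frame is a pair $(S,\mathcal{E}^Q)$ where $S$ is a finite nonempty set and $\mathcal{E}^Q=\{(E_1,p_1),\dots,(E_k,p_k)\}$ with $E_1,\dots,E_k$ distinct, $p_j\in(0,1)$, and $\mathcal{E}=\{E_1,\dots,E_k\}$ a nonempty family of subsets of $S$ with $\emptyset\notin\mathcal{E}$, $S\notin\mathcal{E}$. $\tau_{\mathcal{E}}$ is the topology on $S$ generated by $\mathcal{E}$: $\emptyset$, $S$, all finite intersections of members of $\mathcal{E}$, and all unions of such. Define $\delta(\mathbf{E})=\prod_{E_j\in\mathbf{E}}p_j\prod_{E_j\notin\mathbf{E}}(1-p_j)$ for $\mathbf{E}\subseteq\mathcal{E}$; for $f:2^{\mathcal{E}}\to\tau_{\mathcal{E}}$, $\delta_\tau(f,T)=\sum_{\mathbf{E}\subseteq\mathcal{E}:\,f(\mathbf{E})=T}\delta(\mathbf{E})$ if $T\in\tau_{\mathcal{E}}$ and $0$ otherwise; for $\mathcal{J}\subseteq\tau_{\mathcal{E}}$, $\delta_{\mathcal{J}}(f,A)=\delta_\tau(f,A)/\sum_{T\in\mathcal{J}}\delta_\tau(f,T)$ if $A\in\mathcal{J}$ and $0$ otherwise; $\mathrm{Bel}_{\mathcal{J}}(f,P)=\sum_{A\subseteq P}\delta_{\mathcal{J}}(f,A)$. A basic probability assignment on $S$ is $m:2^S\to[0,1]$ with $m(\emptyset)=0$ and $\sum_{A\subseteq S}m(A)=1$. Dempster's rule: for basic probability assignments $m_1,m_2$ with $K=1-\sum_{A\cap B=\emptyset}m_1(A)m_2(B)>0$,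 $(m_1\oplus m_2)(\emptyset)=0$ and $(m_1\oplus m_2)(C)=\frac1K\sum_{A\cap B=C}m_1(A)m_2(B)$ for nonempty $C\subseteq S$; $m_1\oplus\cdots\oplus m_k$ is obtained by applying this rule successively. *)

From HB Require Import structures.
From mathcomp Require Import all_boot all_order all_algebra.
Set Implicit Arguments. Unset Strict Implicit. Unset Printing Implicit Defensive.
Import Order.TTheory GRing.Theory Num.Theory.
Local Open Scope ring_scope.

Section QEF.
Variables (R : realFieldType) (S : finType) (k : nat).
Variables (E : 'I_k -> {set S}) (p : 'I_k -> R).

Definition qevidence_frame : Prop :=
  [/\ (0 < k)%N, injective E,
      forall j, 0 < p j < 1,
      forall j, E j != set0 &
      forall j, E j != setT].

Definition tauE (T : {set S}) : bool :=
  (T == setT) ||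
  [exists F : {set {set 'I_k}},
     (set0 \notin F) && (T == \bigcup_(J in F) \bigcap_(j in J) E j)].

(* Subsets of the evidence family are represented by index sets
   (E is injective). *)
Definition delta (J : {set 'I_k}) : R :=
  (\prod_(j in J) p j) * \prod_(j in ~: J) (1 - p j).

Definition delta_tau (f : {set 'I_k} -> {set S}) (T : {set S}) : R :=
  if tauE T then \sum_(J : {set 'I_k} | f J == T) delta J else 0.

Definition delta_J (JJ : {set {set S}}) (f : {set 'I_k} -> {set S})
    (A : {set S}) : R :=
  if A \in JJ then delta_tau f A / \sum_(T in JJ) delta_tau f T else 0.

Definition Bel_J (JJ : {set {set S}}) (f : {set 'I_k} -> {set S})
    (P : {set S}) : R :=
  \sum_(A : {set S} | A \subset P) delta_J JJ f A.

Definition i_map (J : {set 'I_k}) : {set S} :=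
  if J == set0 then setT else \bigcap_(j in J) E j.

Definition J_DS : {set {set S}} := [set T | tauE T & T != set0].

Definition m_simple (j : 'I_k) (A : {set S}) : R :=
  if A == E j then p j else if A == setT then 1 - p j else 0.

End QEF.

Section Dempster.
Variables (R : realFieldType) (S : finType).

Definition is_bpa (m : {set S} -> R) : Prop :=
  [/\ forall A, 0 <= m A <= 1, m set0 = 0 & \sum_A m A = 1].

Definition conflict_K (m1 m2 : {set S} -> R) : R :=
  1 - \sum_(A : {set S}) \sum_(B : {set S} | A :&: B == set0) m1 A * m2 B.

Definition dempster (m1 m2 : {set S} -> R) (C : {set S}) : R :=
  if C == set0 then 0
  else (conflict_K m1 m2)^-1 *
       \sum_(A : {set S}) \sum_(B : {set S} | A :&: B == C) m1 A * m2 B.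

Definition dempster_seq (ms : seq ({set S} -> R)) : {set S} -> R :=
  match ms with
  | [::] => fun A => if A == setT then 1 else 0
  | m :: rest => foldl dempster m rest
  end.

Definition Bel (m : {set S} -> R) (P : {set S}) : R :=
  \sum_(A : {set S} | A \subset P) m A.
End Dempster.

From HB Require Import structures.
From mathcomp Require Import all_boot all_order all_algebra.
From mathcomp Require Import ring.
From Stdlib Require Import FunctionalExtensionality.
Set Implicit Arguments. Unset Strict Implicit. Unset Printing Implicit Defensive.
Import Order.TTheory GRing.Theory Num.Theory.
Local Open Scope ring_scope.

(* Relative to a set D of evidence indices, give each J included in D the
   weight prod_(j in J) p_j * prod_(j in D :\: J) (1 - p_j).  Combining the
   m_j for j in D puts on C the total weight of the J with i(J) = C,
   renormalised over those with i(J) nonempty; for D the set of all indices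
   this is delta_{J_DS}(i, -).  The invariant survives one more m_j because
   Dempster's rule is the unnormalised conjunctive rule followed by a
   normalisation that may be postponed to the end. *)

Section DempsterRule.
Variables (R : realFieldType) (S : finType).
Implicit Types (m : {set S} -> R) (A B C : {set S}).

Definition conjunctive m1 m2 C : R :=
  \sum_A \sum_(B | A :&: B == C) m1 A * m2 B.

Definition normalize m C : R :=
  if C == set0 then 0 else m C / \sum_(B | B != set0) m B.

Lemma dempsterE m1 m2 C :
  dempster m1 m2 C =
  if C == set0 then 0
  else conjunctive m1 m2 C / (1 - conjunctive m1 m2 set0).
Proof. by rewrite /dempster /conflict_K; case: ifP => // _; rewrite mulrC. Qed.

Lemma sum_conjunctive m1 m2 :
  \sum_C conjunctive m1 m2 C = (\sum_A m1 A) * (\sum_B m2 B).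
Proof.
rewrite /conjunctive exchange_big big_distrl; apply: eq_bigr => A _ /=.
by rewrite big_distrr [RHS](partition_big (fun B => A :&: B) predT).
Qed.

Lemma conjunctive_vacuous_l m0 m :
  m0 =1 (fun A => (A == setT)%:R) -> conjunctive m0 m =1 m.
Proof.
move=> m0E C; rewrite /conjunctive (bigD1 setT) //= [X in _ + X]big1 ?addr0.
  by rewrite m0E eqxx mulr1n (big_pred1 C) ?mul1r // => B; rewrite setTI eq_sym.
by move=> A /negbTE AT; rewrite big1 // => B _; rewrite m0E AT mul0r.
Qed.

Lemma normalize_id m : m set0 = 0 -> \sum_A m A = 1 -> normalize m =1 m.
Proof.
move=> m0 m1 C; rewrite /normalize.
have -> : \sum_(B | B != set0) m B = 1.
  by rewrite -m1 [RHS](bigD1 set0) //= m0 add0r.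
by case: eqP => [->|_]; rewrite ?m0 ?divr1.
Qed.

Section Normalize.
Variable m : {set S} -> R.
Let Z := \sum_(B | B != set0) m B.
Hypothesis Z_neq0 : Z != 0.

Lemma sum_normalize : \sum_A normalize m A = 1.
Proof.
rewrite /normalize (bigD1 set0) //= eqxx add0r -[RHS](mulfV Z_neq0) mulr_suml.
by apply: eq_bigr => A /negbTE ->.
Qed.

(* [normalize m] kills the mass of [set0], which only feeds the conflict. *)
Lemma conjunctive_normalize m' C :
  C != set0 -> conjunctive (normalize m) m' C = conjunctive m m' C / Z.
Proof.
move=> C0; rewrite /conjunctive mulr_suml; apply: eq_bigr => A _.
rewrite /normalize; case: eqP => [->|_].
  by rewrite !big_pred0 ?mul0r // => B; rewrite set0I eq_sym (negbTE C0).
by rewrite mulr_suml; apply: eq_bigr => B _; rewrite mulrAC.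
Qed.

Lemma dempster_normalize m' :
  \sum_B m' B = 1 -> dempster (normalize m) m' =1 normalize (conjunctive m m').
Proof.
move=> m'1 C; rewrite dempsterE /normalize; case: eqP => // /eqP C0.
have conflictE : 1 - conjunctive (normalize m) m' set0 =
                 (\sum_(B | B != set0) conjunctive m m' B) / Z.
  rewrite -[1]mulr1 -{1}sum_normalize -m'1 -sum_conjunctive (bigD1 set0) //=.
  rewrite addrC addrK mulr_suml.
  by apply: eq_bigr => B; exact: conjunctive_normalize.
by rewrite conflictE conjunctive_normalize // invfM invrK mulrACA mulVf ?mulr1.
Qed.

End Normalize.
End DempsterRule.

Lemma sum_subsets_setU1 (V : nmodType) (T : finType) (D : {set T}) j
    (F : {set T} -> V) :
  j \notin D ->
  \sum_(J : {set T} | J \subset j |: D) F J =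
  \sum_(J : {set T} | J \subset D) (F J + F (j |: J)).
Proof.
move=> jD.
rewrite (bigID (fun J : {set T} => j \in J)) /= addrC big_split /=.
congr (_ + _).
  by apply: eq_bigl => J; rewrite -(setU1K jD) subsetD1 setU1K.
rewrite (reindex_onto (fun J => j |: J) (fun J => J :\ j)) /=; last first.
  by move=> J /andP[_ jJ]; rewrite setD1K.
apply: eq_bigl => J; apply/idP/idP.
  case/andP=> /andP[JjD _] /eqP <-.
  by rewrite -(setU1K jD) setSD.
move=> JD; have jJ : j \notin J by apply: contra jD; exact: (subsetP JD).
by rewrite setU11 setU1K // eqxx setUS.
Qed.

Section Weight.
Variables (R : numDomainType) (T : finType) (p : T -> R).

Definition weight (D J : {set T}) : R :=
  (\prod_(j in J) p j) * \prod_(j in D :\: J) (1 - p j).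

Lemma weight0 : weight set0 set0 = 1.
Proof. by rewrite /weight setD0 !big_set0 mulr1. Qed.

Section Extend.
Variables (D J : {set T}) (j : T).
Hypotheses (jD : j \notin D) (JD : J \subset D).

Let jJ : j \notin J.
Proof. by apply: contra jD; exact: (subsetP JD). Qed.

Lemma weight_setU1_out : weight (j |: D) J = (1 - p j) * weight D J.
Proof.
rewrite /weight; have -> : (j |: D) :\: J = j |: (D :\: J).
  by apply/setP => x; rewrite !inE; case: eqP => // ->; rewrite (negbTE jJ).
by rewrite big_setU1 ?inE ?(negbTE jD) ?andbF //=; ring.
Qed.

Lemma weight_setU1_in : weight (j |: D) (j |: J) = p j * weight D J.
Proof.
rewrite /weight; have -> : (j |: D) :\: (j |: J) = D :\: J.
  apply/setP => x; rewrite !inE.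
  by case: eqP => // ->; rewrite (negbTE jD) andbF.
by rewrite big_setU1 //=; ring.
Qed.

End Extend.

Hypothesis p_range : forall j, 0 < p j < 1.

Lemma weight_gt0 D J : 0 < weight D J.
Proof.
apply: mulr_gt0; apply: prodr_gt0 => j _; have /andP[p_gt0 p_lt1] := p_range j.
  exact: p_gt0.
by rewrite subr_gt0.
Qed.

End Weight.

Section Evidence.
Variables (R : realFieldType) (S : finType) (k : nat).
Variables (E : 'I_k -> {set S}) (p : 'I_k -> R).
Implicit Types (D J : {set 'I_k}) (A C : {set S}).

Definition mass D C : R :=
  \sum_(J : {set 'I_k} | (J \subset D) && (i_map E J == C)) weight p D J.

Definition combined D : {set S} -> R := normalize (mass D).

Lemma i_map_setU1 J j : j \notin J -> i_map E (j |: J) = E j :&: i_map E J.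
Proof.
move=> jJ; have /negbTE jJ0 : j |: J != set0.
  by apply/set0Pn; exists j; rewrite setU11.
rewrite /i_map jJ0.
by case: (eqVneq J set0) => [->|_]; rewrite ?setU0 ?big_set1 ?setIT ?big_setU1.
Qed.

Lemma tauE_i_map J : tauE E (i_map E J).
Proof.
rewrite /tauE /i_map; case: (eqVneq J set0) => [_|J0]; first by rewrite eqxx.
apply/orP; right; apply/existsP; exists [set J].
by rewrite inE eq_sym J0 big_set1 eqxx.
Qed.

Lemma mass_eq0 D A : ~~ tauE E A -> mass D A = 0.
Proof.
move=> tauA; rewrite /mass big_pred0 // => J.
by apply/negbTE; apply: contra tauA => /andP[_ /eqP <-]; exact: tauE_i_map.
Qed.

Lemma sum_mass_mul D (g : {set S} -> R) :
  \sum_A mass D A * g A =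
  \sum_(J : {set 'I_k} | J \subset D) weight p D J * g (i_map E J).
Proof.
rewrite [RHS](partition_big (i_map E) predT) //=; apply: eq_bigr => A _.
by rewrite mulr_suml; apply: eq_bigr => J /andP[_ /eqP ->].
Qed.

Hypothesis E_neqT : forall j, E j != setT.

Lemma conjunctive_m_simple m j C :
  conjunctive m (m_simple E p j) C =
  \sum_A m A * (p j * (A :&: E j == C)%:R + (1 - p j) * (A == C)%:R).
Proof.
have /negbTE TEj : setT != E j by rewrite eq_sym E_neqT.
apply: eq_bigr => A _; rewrite -mulr_sumr; congr (_ * _).
rewrite big_mkcond (bigD1 (E j)) //= (bigD1 setT) ?TEj //=.
rewrite big1 ?addr0; last first.
  by move=> B /andP[/negbTE BEj /negbTE BT]; rewrite /m_simple BEj BT if_same.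
rewrite /m_simple eqxx TEj eqxx setIT.
by case: eqP; case: eqP => _ _; rewrite ?mulr1 ?mulr0 ?addr0 ?add0r.
Qed.

(* Combining with m_j splits every J into J (weight 1 - p_j, focus i(J))
   and j |: J (weight p_j, focus E_j :&: i(J)). *)
Lemma conjunctive_mass_m_simple D j :
  j \notin D -> conjunctive (mass D) (m_simple E p j) = mass (j |: D).
Proof.
move=> jD; apply: functional_extensionality => C.
rewrite conjunctive_m_simple sum_mass_mul /mass big_mkcondr.
rewrite sum_subsets_setU1 //; apply: eq_bigr => J JD.
have jJ : j \notin J by apply: contra jD; exact: subsetP.
rewrite weight_setU1_out // weight_setU1_in // i_map_setU1 // [E j :&: _]setIC.
by case: eqP; case: eqP => _ _; rewrite ?mulr1n ?mulr0n; ring.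
Qed.

Lemma mass_set0 : mass set0 =1 (fun C => (C == setT)%:R).
Proof.
move=> C; rewrite /mass big_mkcondr (big_pred1 set0) => [|J]; last first.
  exact: subset0.
by rewrite /i_map eqxx weight0 eq_sym; case: eqP.
Qed.

Lemma mass_set1 j : mass [set j] = m_simple E p j.
Proof.
rewrite -[[set j]]setU0 -conjunctive_mass_m_simple ?inE //.
apply: functional_extensionality.
by apply: conjunctive_vacuous_l; exact: mass_set0.
Qed.

Lemma sum_m_simple j : \sum_B m_simple E p j B = 1.
Proof.
have /negbTE TEj : setT != E j by rewrite eq_sym E_neqT.
rewrite (bigD1 (E j)) //= (bigD1 setT) ?TEj //= big1.
  by rewrite /m_simple eqxx TEj eqxx addr0 addrC subrK.
by move=> B /andP[/negbTE BEj /negbTE BT]; rewrite /m_simple BEj BT.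
Qed.

Hypothesis p_range : forall j, 0 < p j < 1.
Hypothesis E_neq0 : forall j, E j != set0.
Hypothesis setT_neq0 : [set: S] != set0.

Lemma mass_nonempty_gt0 D : 0 < \sum_(C | C != set0) mass D C.
Proof.
have weight_ge0 J : 0 <= weight p D J by exact/ltW/weight_gt0.
have mass_ge0 C : 0 <= mass D C by exact: sumr_ge0.
have massT_gt0 : 0 < mass D setT.
  rewrite /mass (bigD1 set0) /=; last by rewrite sub0set /i_map eqxx /= eqxx.
  by rewrite addrC ltr_wpDl ?sumr_ge0 ?weight_gt0.
by rewrite (bigD1 setT) //= addrC ltr_wpDl ?sumr_ge0.
Qed.

Lemma combined_set1 j : combined [set j] = m_simple E p j.
Proof.
rewrite /combined mass_set1; apply: functional_extensionality.
apply: normalize_id; last exact: sum_m_simple.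
by rewrite /m_simple eq_sym (negbTE (E_neq0 j)) eq_sym (negbTE setT_neq0).
Qed.

Lemma dempster_combined_m_simple D j :
  j \notin D -> dempster (combined D) (m_simple E p j) = combined (j |: D).
Proof.
move=> jD; apply: functional_extensionality => C.
rewrite /combined dempster_normalize ?sum_m_simple //.
  by rewrite conjunctive_mass_m_simple.
by rewrite gt_eqF ?mass_nonempty_gt0.
Qed.

Lemma foldl_dempster_combined D s :
  uniq s -> {in s, forall j, j \notin D} ->
  foldl (@dempster R S) (combined D) [seq m_simple E p j | j <- s] =
  combined (D :|: [set j in s]).
Proof.
elim: s D => [|j s IH] D /=.
  by move=> _ _; congr combined; apply/setP => x; rewrite !inE orbF.
case/andP=> js us notinD.
rewrite dempster_combined_m_simple ?notinD ?mem_head // IH //.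
  by congr combined; apply/setP => x; rewrite !inE orbA [(x == j) || _]orbC.
move=> x xs; rewrite in_setU1 negb_or notinD ?inE ?xs ?orbT // andbT.
by apply: contraNneq js => <-.
Qed.

Lemma dempster_seq_m_simple s :
  s != [::] -> uniq s ->
  dempster_seq [seq m_simple E p j | j <- s] = combined [set j in s].
Proof.
case: s => // j s _ /andP[js us] /=.
rewrite -combined_set1 foldl_dempster_combined //.
  by congr combined; apply/setP => x; rewrite !inE.
by move=> x xs; rewrite inE; apply: contraNneq js => <-.
Qed.

Lemma delta_tau_i_map A : delta_tau E p (i_map E) A = mass setT A.
Proof.
rewrite /delta_tau; case: ifPn => [_|tauA]; last by rewrite mass_eq0.
by apply: eq_big => [J|J _]; rewrite ?subsetT // /weight setTD.
Qed.

Lemma delta_J_i_map A : delta_J E p (J_DS E) (i_map E) A = combined setT A.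
Proof.
have normE : \sum_(T in J_DS E) delta_tau E p (i_map E) T =
             \sum_(T | T != set0) mass setT T.
  rewrite big_mkcond [RHS]big_mkcond; apply: eq_bigr => T _.
  rewrite inE delta_tau_i_map.
  by case: (boolP (tauE E T)) => [|/mass_eq0 ->] //; rewrite if_same.
rewrite /delta_J /combined /normalize normE delta_tau_i_map inE.
case: (eqVneq A set0) => [|_]; rewrite ?andbF ?andbT //.
by case: (boolP (tauE E A)) => // /mass_eq0 ->; rewrite mul0r.
Qed.

Lemma Bel_J_i_map P :
  Bel_J E p (J_DS E) (i_map E) P = Bel (combined setT) P.
Proof. by apply: eq_bigr => A _; exact: delta_J_i_map. Qed.

End Evidence.

Theorem proposition5 (R : realFieldType) (S : finType) (k : nat)
  (E : 'I_k -> {set S}) (p : 'I_k -> R) :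
  qevidence_frame E p ->
  forall P : {set S},
    Bel_J E p (J_DS E) (i_map E) P =
    Bel (dempster_seq [seq m_simple E p j | j <- enum 'I_k]) P.
Proof.
case=> k_gt0 _ p_range E_neq0 E_neqT P.
have setT_neq0 : [set: S] != set0.
  apply: contraNneq (E_neq0 (Ordinal k_gt0)) => ST.
  by rewrite -subset0 -ST subsetT.
have enum_neq0 : enum 'I_k != [::] by rewrite -size_eq0 size_enum_ord -lt0n.
rewrite Bel_J_i_map dempster_seq_m_simple ?enum_uniq //.
by congr (Bel (combined E p _) P); apply/setP => j; rewrite !inE mem_enum.
Qed.
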